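(* Let $P \subseteq \mathbb{R}^7$ be an associative $3$-plane. Then the two $\mathfrak{so}(3)$ subalgebras $\Lambda^2(P)$ and $\Psi(P)$ of $\Lambda^2(\mathbb{R}^7)$ commute: if $X \in \Lambda^2(P)$ and $Y \in \Psi(P)$ then $[X,Y] = 0$.
   Context: Equip $\mathbb{R}^7$ with its standard inner product, orientation and basis. Let $\varphi = e_{123} - e_{167} - e_{527} - e_{563} - e_{415} - e_{426} - e_{437}$ ($e_{ijk} = e_i\wedge e_j\wedge e_k$), $\psi = \star\varphi = e_{4567} - e_{4523} - e_{4163} - e_{4127} - e_{2637} - e_{1537} - e_{1526}$, and define $\times$ by $\langle u \times v, w \rangle = \varphi(u,v,w)$. A $3$-dimensional subspace is associative if closed under $\times$. For $u,v$: $u\wedge v$ is the 2-form $(a,b)\mapsto \langle u,a\rangle\langle v,b\rangle - \langle u,b\rangle\langle v,a\rangle$, and $\Psi_{uv}$ is the 2-form $(a,b)\mapsto\psi(u,v,a,b)$. $\Lambda^2(P) = \mathrm{Span}\{u\wedge v: u,v\in P\}$, $\Psi(P) = \mathrm{Span}\{\Psi_{uv} : u,v\in P\}$. Skew bilinear forms are identified with skew-adjoint operators via $X(a,b) = \langle X(a),b\rangle$, and the bracket is the commutator. *)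

(* R^7 is modelled as row vectors 'rV[R]_7 over a realType R.
   Basis vector e_i (1-based, i = 1..7) is delta_mx 0 (i-1). *)
From HB Require Import structures.
From mathcomp Require Import all_boot all_order all_algebra.
From mathcomp Require Import reals.
Set Implicit Arguments. Unset Strict Implicit. Unset Printing Implicit Defensive.
Import Order.TTheory GRing.Theory Num.Theory.
Local Open Scope ring_scope.

Section G2.
Variable R : realType.
Notation V := 'rV[R]_7.

Definition dot (u v : V) : R := \sum_(i < 7) u 0 i * v 0 i.

Definition ebasis (i : nat) : V := delta_mx 0 (inord i.-1).

Definition coord7 (u : V) (i : nat) : R := u 0 (inord i.-1).

Definition e3 (i j k : nat) (u v w : V) : R :=
  \det (\matrix_(r < 3, c < 3)
          coord7 (tnth [tuple u; v; w] r) (tnth [tuple i; j; k] c)).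

Definition e4 (i j k l : nat) (u v w x : V) : R :=
  \det (\matrix_(r < 4, c < 4)
          coord7 (tnth [tuple u; v; w; x] r) (tnth [tuple i; j; k; l] c)).

Definition phi (u v w : V) : R :=
  e3 1 2 3 u v w - e3 1 6 7 u v w - e3 5 2 7 u v w - e3 5 6 3 u v w
  - e3 4 1 5 u v w - e3 4 2 6 u v w - e3 4 3 7 u v w.

Definition psi (u v w x : V) : R :=
  e4 4 5 6 7 u v w x - e4 4 5 2 3 u v w x - e4 4 1 6 3 u v w x
  - e4 4 1 2 7 u v w x - e4 2 6 3 7 u v w x - e4 1 5 3 7 u v w x
  - e4 1 5 2 6 u v w x.

(* cross product: <u x v, w> = phi(u,v,w) *)
Definition cross (u v : V) : V := \row_(k < 7) phi u v (delta_mx 0 k).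

Definition associative_plane (P : 'M[R]_7) : Prop :=
  \rank P = 3%N /\
  forall u v : V, (u <= P)%MS -> (v <= P)%MS -> (cross u v <= P)%MS.

(* bilinear forms on R^7, represented by their Gram matrix X i j = X(e_i,e_j) *)
Definition form_mx (f : V -> V -> R) : 'M[R]_7 :=
  \matrix_(i < 7, j < 7) f (delta_mx 0 i) (delta_mx 0 j).

Definition wedge2 (u v : V) : V -> V -> R :=
  fun a b => dot u a * dot v b - dot u b * dot v a.

Definition Psi2 (u v : V) : V -> V -> R := fun a b => psi u v a b.

Definition in_Lambda2 (P : 'M[R]_7) (X : 'M[R]_7) : Prop :=
  exists (n : nat) (c : 'I_n -> R) (u v : 'I_n -> V),
    (forall k, (u k <= P)%MS /\ (v k <= P)%MS) /\
    X = \sum_(k < n) c k *: form_mx (wedge2 (u k) (v k)).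

Definition in_PsiP (P : 'M[R]_7) (Y : 'M[R]_7) : Prop :=
  exists (n : nat) (c : 'I_n -> R) (u v : 'I_n -> V),
    (forall k, (u k <= P)%MS /\ (v k <= P)%MS) /\
    Y = \sum_(k < n) c k *: form_mx (Psi2 (u k) (v k)).

(* skew form with Gram matrix X identified with the operator X(.) given by
   <X(a),b> = X(a,b): since X(a,b) = a *m X *m b^T = dot (a *m X) b,
   the operator is a |-> a *m X. *)
Definition skew_op (X : 'M[R]_7) (a : V) : V := a *m X.

Definition bracket (X Y : 'M[R]_7) : V -> V :=
  fun a => skew_op X (skew_op Y a) - skew_op Y (skew_op X a).

End G2.

(* The 4-form ψ is represented by the vector-valued 3-form
   χ(x,y,z) = x × (y × z) + ⟨x,y⟩ z − ⟨x,z⟩ y, i.e. ψ(x,y,z,a) = ⟨χ(x,y,z), a⟩,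
   an identity checked in coordinates.  If P is associative then χ(x,y,z) ∈ P for
   x, y, z ∈ P; as a 4-form, ψ vanishes on the 3-dimensional P, so
   |χ(x,y,z)|² = ψ(x,y,z,χ(x,y,z)) = 0.  Hence Ψ_wz annihilates P for w, z ∈ P, on both
   sides since it is skew, while every element of Λ²(P) is a combination of the
   uᵀv − vᵀu with u, v ∈ P: both products XY and YX vanish. *)

From HB Require Import structures.
From mathcomp Require Import all_boot all_order all_algebra.
From mathcomp Require Import boolp reals ring.
Set Implicit Arguments. Unset Strict Implicit. Unset Printing Implicit Defensive.
Import GRing.Theory Num.Theory.
Local Open Scope ring_scope.

Section NatIndexedDeterminants.
Variable R : comPzRingType.

Definition mx_nat n (f : nat -> nat -> R) : 'M[R]_n := \matrix_(i, j) f i j.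

Lemma det_mx_nat_row0 n (f : nat -> nat -> R) :
  \det (mx_nat n.+1 f) =
  \sum_(j < n.+1) f 0%N j * (-1) ^+ j * \det (mx_nat n (fun i k => f i.+1 (bump j k))).
Proof.
rewrite (expand_det_row _ ord0); apply: eq_bigr => j _.
rewrite !mxE /cofactor add0n mulrA; congr (_ * \det _).
by apply/matrixP => i k; rewrite !mxE.
Qed.

(* [bump], [leq], [subn] and [addn] do not simplify, so they are unfolded to let [/=]
   compute the column indices of the minors. *)
Ltac laplace_row0 :=
  rewrite det_mx_nat_row0 !big_ord_recl big_ord0 /= /bump /leq /subn /addn /=.

Definition minor_row0 (f : nat -> nat -> R) (cols : seq nat) i k := f i.+1 (nth 0%N cols k).

Definition det2_nat (f : nat -> nat -> R) := f 0%N 0%N * f 1%N 1%N - f 0%N 1%N * f 1%N 0%N.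

Definition det3_nat (f : nat -> nat -> R) :=
    f 0%N 0%N * det2_nat (minor_row0 f [:: 1; 2]%N)
  - f 0%N 1%N * det2_nat (minor_row0 f [:: 0; 2]%N)
  + f 0%N 2%N * det2_nat (minor_row0 f [:: 0; 1]%N).

Definition det4_nat (f : nat -> nat -> R) :=
    f 0%N 0%N * det3_nat (minor_row0 f [:: 1; 2; 3]%N)
  - f 0%N 1%N * det3_nat (minor_row0 f [:: 0; 2; 3]%N)
  + f 0%N 2%N * det3_nat (minor_row0 f [:: 0; 1; 3]%N)
  - f 0%N 3%N * det3_nat (minor_row0 f [:: 0; 1; 2]%N).

Lemma det_mx_nat2 (f : nat -> nat -> R) : \det (mx_nat 2 f) = det2_nat f.
Proof. by laplace_row0; rewrite !det_mx11 !mxE /det2_nat; ring. Qed.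

Lemma det_mx_nat3 (f : nat -> nat -> R) : \det (mx_nat 3 f) = det3_nat f.
Proof. by laplace_row0; rewrite !det_mx_nat2 /det3_nat /det2_nat /minor_row0 /=; ring. Qed.

Lemma det_mx_nat4 (f : nat -> nat -> R) : \det (mx_nat 4 f) = det4_nat f.
Proof. by laplace_row0; rewrite !det_mx_nat3 /det4_nat /det3_nat /det2_nat /minor_row0 /=; ring. Qed.

End NatIndexedDeterminants.

Lemma det_mulmx_rank_lt (F : fieldType) m n (A : 'M[F]_(n, m)) (B : 'M[F]_(m, n)) :
  (\rank A < n)%N -> \det (A *m B) = 0.
Proof.
move=> rankA; apply/eqP; apply: contraTT rankA => detAB.
by rewrite -leqNgt -{1}(mxrank_unit (A := A *m B)) ?unitmxE ?unitfE // mxrankM_maxl.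
Qed.

Section G2Forms.
Variable R : realType.
Implicit Types (P : 'M[R]_7) (u v w x y z a b : 'rV[R]_7).

Lemma e3E i j k u v w :
  e3 i j k u v w =
  det3_nat (fun r c => coord7 (nth 0 [:: u; v; w] r) (nth 0%N [:: i; j; k] c)).
Proof.
rewrite -det_mx_nat3; congr (\det _).
by apply/matrixP => r c; rewrite !mxE (tnth_nth 0) (tnth_nth 0%N).
Qed.

Lemma e4E i j k l u v w x :
  e4 i j k l u v w x =
  det4_nat (fun r c => coord7 (nth 0 [:: u; v; w; x] r) (nth 0%N [:: i; j; k; l] c)).
Proof.
rewrite -det_mx_nat4; congr (\det _).
by apply/matrixP => r c; rewrite !mxE (tnth_nth 0) (tnth_nth 0%N).
Qed.

Ltac expand_minors :=
  rewrite ?e3E ?e4E /det4_nat /det3_nat /det2_nat /minor_row0 /=.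

Lemma psi_swap x y a b : psi x y a b = - psi x y b a.
Proof. by rewrite /psi; expand_minors; ring. Qed.

Lemma coord7_ebasis m n : (0 < m <= 7)%N -> (0 < n <= 7)%N ->
  coord7 (ebasis R m) n = (m == n)%:R.
Proof.
case: m => // m /andP[_ m7]; case: n => // n /andP[_ n7].
by rewrite /coord7 /ebasis mxE eqxx -val_eqE /= !inordK // eqSS eq_sym.
Qed.

Lemma coord7_cross_phi u v n : coord7 (cross u v) n = phi u v (ebasis R n).
Proof. by rewrite /coord7 mxE. Qed.

Lemma coord7D u v n : coord7 (u + v) n = coord7 u n + coord7 v n.
Proof. by rewrite /coord7 mxE. Qed.

Lemma coord7N u n : coord7 (- u) n = - coord7 u n.
Proof. by rewrite /coord7 mxE. Qed.

Lemma coord7Z c u n : coord7 (c *: u) n = c * coord7 u n.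
Proof. by rewrite /coord7 mxE. Qed.

Lemma dot_coord7 u v : dot u v = \sum_(i < 7) coord7 u i.+1 * coord7 v i.+1.
Proof. by apply: eq_bigr => i _; rewrite /coord7 inord_val. Qed.

Definition plucker u v i j := coord7 u i * coord7 v j - coord7 u j * coord7 v i.
Arguments plucker u v i%_N j%_N.

Lemma coord7_cross u v n : (0 < n <= 7)%N ->
  coord7 (cross u v) n =
  nth 0 [:: plucker u v 2 3 - plucker u v 6 7 + plucker u v 4 5;
           plucker u v 3 1 + plucker u v 5 7 + plucker u v 4 6;
           plucker u v 1 2 - plucker u v 5 6 + plucker u v 4 7;
           plucker u v 5 1 + plucker u v 6 2 + plucker u v 7 3;
           plucker u v 7 2 + plucker u v 3 6 + plucker u v 1 4;
           plucker u v 1 7 + plucker u v 5 3 + plucker u v 2 4;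
           plucker u v 6 1 + plucker u v 2 5 + plucker u v 3 4] n.-1.
Proof.
rewrite coord7_cross_phi /phi.
by case: n => [|[|[|[|[|[|[|[|]]]]]]]] //= _; expand_minors; rewrite !coord7_ebasis //= /plucker; ring.
Qed.

Definition chi x y z : 'rV[R]_7 := cross x (cross y z) + dot x y *: z - dot x z *: y.

Lemma psi_chi x y z a : psi x y z a = dot (chi x y z) a.
Proof.
rewrite /chi !dot_coord7 !big_ord_recr !big_ord0 /= !(coord7D, coord7N, coord7Z).
(* the second pass expands the coordinates of the inner product [cross y z] *)
do 2 rewrite !coord7_cross //= /plucker.
by rewrite /psi; expand_minors; ring.
Qed.

Lemma dot_delta u m : dot u (delta_mx 0 m) = u 0 m.
Proof.
rewrite /dot (bigD1 m) //= mxE !eqxx mulr1 big1 ?addr0 // => k /negPf km.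
by rewrite mxE km mulr0.
Qed.

Lemma dot0l u : dot 0 u = 0.
Proof. by rewrite /dot big1 // => i _; rewrite mxE mul0r. Qed.

Lemma dot_self_eq0 u : dot u u = 0 -> u = 0.
Proof.
move=> /psumr_eq0P uu0; apply/rowP => i; rewrite mxE.
by apply/eqP; rewrite -sqrf_eq0 expr2 uu0 // => j _; rewrite -expr2 sqr_ge0.
Qed.

Lemma e4_rank_lt4 P i j k l x y z w : (\rank P < 4)%N ->
  (x <= P)%MS -> (y <= P)%MS -> (z <= P)%MS -> (w <= P)%MS ->
  e4 i j k l x y z w = 0.
Proof.
move=> rankP xP yP zP wP.
pose M : 'M[R]_(4, 7) := \matrix_(r, c) (nth 0 [:: x; y; z; w] r) 0 c.
pose N : 'M[R]_(4, 7) := \matrix_(s, c) (ebasis R (nth 0%N [:: i; j; k; l] s)) 0 c.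
have -> : e4 i j k l x y z w = \det (M *m N^T).
  congr (\det _); apply/matrixP => r s; rewrite !mxE (tnth_nth 0) (tnth_nth 0%N).
  by rewrite /coord7 -dot_delta; apply: eq_bigr => c _; rewrite !mxE.
apply: det_mulmx_rank_lt; apply: leq_ltn_trans rankP; apply: mxrankS.
apply/row_subP => r; have -> : row r M = nth 0 [:: x; y; z; w] r by apply/rowP => c; rewrite !mxE.
by case: r => [[|[|[|[|]]]] ?].
Qed.

Lemma psi_rank_lt4 P x y z w : (\rank P < 4)%N ->
  (x <= P)%MS -> (y <= P)%MS -> (z <= P)%MS -> (w <= P)%MS -> psi x y z w = 0.
Proof. by move=> *; rewrite /psi !(@e4_rank_lt4 P) // !subr0. Qed.

Lemma chi_sub P x y z : associative_plane P ->
  (x <= P)%MS -> (y <= P)%MS -> (z <= P)%MS -> (chi x y z <= P)%MS.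
Proof.
move=> [_ crossP] xP yP zP.
by rewrite /chi -scaleNr !addmx_sub ?scalemx_sub ?crossP.
Qed.

Lemma chi_assoc_eq0 P x y z : associative_plane P ->
  (x <= P)%MS -> (y <= P)%MS -> (z <= P)%MS -> chi x y z = 0.
Proof.
move=> assocP xP yP zP; have [rankP _] := assocP.
apply: dot_self_eq0; rewrite -psi_chi (@psi_rank_lt4 P) ?rankP ?chi_sub //.
Qed.

Lemma psi_assoc_eq0 P x y z a : associative_plane P ->
  (x <= P)%MS -> (y <= P)%MS -> (z <= P)%MS -> psi x y z a = 0.
Proof. by move=> *; rewrite psi_chi (@chi_assoc_eq0 P) ?dot0l. Qed.

Lemma form_mx_Psi2_tr w z : (form_mx (Psi2 w z))^T = - form_mx (Psi2 w z).
Proof. by apply/matrixP => i j; rewrite !mxE /Psi2 psi_swap. Qed.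

Lemma mulmx_Psi2_eq0 P u w z : associative_plane P ->
  (u <= P)%MS -> (w <= P)%MS -> (z <= P)%MS -> u *m form_mx (Psi2 w z) = 0.
Proof.
move=> assocP uP wP zP; apply/rowP => j; rewrite !mxE.
transitivity (- dot (chi w z (delta_mx 0 j)) u).
  rewrite /dot -sumrN; apply: eq_bigr => m _.
  by rewrite mxE /Psi2 psi_swap psi_chi dot_delta mulrN mulrC.
by rewrite -psi_chi psi_swap opprK (@psi_assoc_eq0 P).
Qed.

Lemma form_mx_wedge2 u v : form_mx (wedge2 u v) = u^T *m v - v^T *m u.
Proof.
apply/matrixP => i j; rewrite !mxE /wedge2 !big_ord1 !mxE !dot_delta.
by rewrite (mulrC (u _ j)).
Qed.

Section SpanAnnihilation.
Variable P : 'M[R]_7.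

Lemma PsiP_tr Y : in_PsiP P Y -> Y^T = - Y.
Proof.
move=> [n [c [u [v [_ ->]]]]]; rewrite raddf_sum -sumrN.
by apply: eq_bigr => k _; rewrite [LHS]linearZ /= form_mx_Psi2_tr scalerN.
Qed.

Lemma mulmx_PsiP_eq0 Y u : associative_plane P -> in_PsiP P Y ->
  (u <= P)%MS -> u *m Y = 0.
Proof.
move=> assocP [n [c [w [z [wzP ->]]]]] uP; rewrite mulmx_sumr big1 // => k _.
by have [wP zP] := wzP k; rewrite -scalemxAr (mulmx_Psi2_eq0 assocP) ?scaler0.
Qed.

Lemma Lambda2_mulmx_eq0 p X (Y : 'M[R]_(7, p)) : in_Lambda2 P X ->
  (forall u, (u <= P)%MS -> u *m Y = 0) -> X *m Y = 0.
Proof.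
move=> [n [c [u [v [uvP ->]]]]] PY0; rewrite mulmx_suml big1 // => k _.
have [uP vP] := uvP k.
by rewrite -(scalemxAl (c k)) form_mx_wedge2 mulmxBl -!mulmxA !PY0 // !mulmx0 subrr scaler0.
Qed.

Lemma mulmx_Lambda2_eq0 p X (Y : 'M[R]_(p, 7)) : in_Lambda2 P X ->
  (forall u, (u <= P)%MS -> Y *m u^T = 0) -> Y *m X = 0.
Proof.
move=> [n [c [u [v [uvP ->]]]]] YP0; rewrite mulmx_sumr big1 // => k _.
have [uP vP] := uvP k.
by rewrite -(scalemxAr (c k)) form_mx_wedge2 mulmxBr !mulmxA !YP0 // !mul0mx subrr scaler0.
Qed.

End SpanAnnihilation.

End G2Forms.

Theorem proposition4p7 (R : realType) (P X Y : 'M[R]_7) :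
  associative_plane P -> in_Lambda2 P X -> in_PsiP P Y ->
  bracket X Y = (fun _ => 0).
Proof.
move=> assocP LX PY.
have PY0 (u : 'rV[R]_7) : (u <= P)%MS -> u *m Y = 0 := mulmx_PsiP_eq0 assocP PY.
have YP0 (u : 'rV[R]_7) : (u <= P)%MS -> Y *m u^T = 0.
  by move=> uP; rewrite -[Y]trmxK -trmx_mul (PsiP_tr PY) mulmxN PY0 // oppr0 trmx0.
have XY : X *m Y = 0 := Lambda2_mulmx_eq0 LX PY0.
have YX : Y *m X = 0 := mulmx_Lambda2_eq0 LX YP0.
apply: funext => a.
by rewrite /bracket /skew_op -!mulmxA XY YX !mulmx0 subrr.
Qed.
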